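(* Let $\phi_{car}(z)=1+z+z^2/2$ and $\Omega_{car}=\phi_{car}(\mathbb{D})$, where $\mathbb{D}=\{z\in\mathbb{C}:|z|<1\}$. For $1/2<a<5/2$, let \[r_a=\begin{cases}(2a-1)/2, & 1/2<a\le 3/2,\\ (5-2a)/2, & 3/2\le a<5/2,\end{cases}\qquad R_a=\begin{cases}(5-2a)/2, & 1/2<a\le 7/6,\\ \sqrt{(2a-1)^3/(8(a-1))}, & 7/6\le a<5/2.\end{cases}\] Then \[\{w:|w-a|<r_a\}\subseteq\Omega_{car}\subseteq\{w:|w-a|<R_a\}.\] *)

From Stdlib Require Import Reals Lra.
From Coquelicot Require Import Coquelicot.
Open Scope R_scope.

Definition phi_car (z : C) : C := (1 + z + (z * z) / 2)%C.

Definition Omega_car (w : C) : Prop := exists z : C, Cmod z < 1 /\ w = phi_car z.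

Definition r_a (a : R) : R :=
  if Rle_dec a (3/2) then (2*a - 1)/2 else (5 - 2*a)/2.

Definition R_a (a : R) : R :=
  if Rle_dec a (7/6) then (5 - 2*a)/2
  else sqrt ((2*a - 1)^3 / (8*(a - 1))).

(* Since [2 phi_car z - 1 = (1 + z)^2], the map [w |-> 2 w - 1] sends [Omega_car] onto
   the image of the disc [|u - 1| < 1] under squaring, which is the cardioid
   [rho < 2 (1 + cos theta)], i.e. [|W|^2 < 2 (|W| + Re W)].  The same map sends the disc
   [|w - a| < r] to [|W - B| < 2 r] with [B = 2 a - 1], and
   [|W - B|^2 = |W|^2 - 2 B Re W + B^2].  Eliminating [Re W] with the cardioid inequality
   leaves quadratic inequalities in [|W|], which lies in [[0, 4)] on the cardioid: the
   bound [(1 - B) |W|^2 + 2 B |W| + B^2] is maximal at [|W| = 4] when [B <= 4/3] and at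
   [|W| = B / (B - 1)] otherwise. *)
From Stdlib Require Import Reals Lra Psatz.
From Coquelicot Require Import Coquelicot.
Open Scope R_scope.

Definition cardioid (W : C) : Prop := Cmod W ^ 2 < 2 * (Cmod W + Re W).

Lemma Cmod_sub_RtoC_sq (W : C) (B : R) :
  Cmod (W - RtoC B) ^ 2 = Cmod W ^ 2 - 2 * B * Re W + B ^ 2.
Proof. rewrite !Cmod2_alt; destruct W as [x y]; simpl; ring. Qed.

Lemma Cmod_lt_of_sq_lt (z : C) (r : R) : 0 <= r -> Cmod z ^ 2 < r ^ 2 -> Cmod z < r.
Proof. intros Hr H; pose proof (Cmod_ge_0 z) as Hz; nra. Qed.

Lemma Cmod_lt_sqrt (z : C) (y : R) : Cmod z ^ 2 < y -> Cmod z < sqrt y.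
Proof.
  intros H; rewrite <- (sqrt_pow2 (Cmod z)) by apply Cmod_ge_0.
  apply sqrt_lt_1_alt; split; [apply pow2_ge_0 | exact H].
Qed.

Lemma Re_le_Cmod (W : C) : Re W <= Cmod W.
Proof. pose proof (re_le_Cmod W); pose proof (Rle_abs (Re W)); lra. Qed.

Lemma Cmod_sub1_lt1 (u : C) : Cmod (u - 1) < 1 <-> Cmod u ^ 2 < 2 * Re u.
Proof.
  pose proof (Cmod_sub_RtoC_sq u 1) as E; pose proof (Cmod_ge_0 (u - 1)) as Hd.
  split; intros H.
  - nra.
  - apply Cmod_lt_of_sq_lt; [lra | nra].
Qed.

Lemma cardioid_Csquare (u : C) : 0 <= Re u -> (cardioid (u * u) <-> Cmod (u - 1) < 1).
Proof.
  intros Hu; rewrite Cmod_sub1_lt1; unfold cardioid.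
  assert (Hre : Re (u * u) = 2 * Re u ^ 2 - Cmod u ^ 2).
  { rewrite Cmod2_alt; destruct u as [x y]; simpl; ring. }
  rewrite Cmod_mult, Hre; pose proof (pow2_ge_0 (Cmod u)) as Hn.
  split; intros H; nra.
Qed.

Lemma Csqrt_exists (W : C) : exists u : C, (u * u)%C = W /\ 0 <= Re u.
Proof.
  destruct W as [X Y].
  set (m := Cmod (X, Y)).
  assert (Hm : m ^ 2 = X ^ 2 + Y ^ 2) by apply Cmod2_alt.
  assert (HXm : Rabs X <= m) by apply (re_le_Cmod (X, Y)).
  apply Rabs_le_between in HXm.
  set (p := sqrt ((m + X) / 2)); set (q := sqrt ((m - X) / 2)).
  assert (Hp : p * p = (m + X) / 2) by (apply sqrt_sqrt; lra).
  assert (Hq : q * q = (m - X) / 2) by (apply sqrt_sqrt; lra).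
  assert (Hpq : (2 * p * q) ^ 2 = Y ^ 2) by nra.
  assert (H2pq : 0 <= 2 * p * q).
  { apply Rmult_le_pos; [apply Rmult_le_pos; [lra|] |]; apply sqrt_pos. }
  destruct (Rle_dec 0 Y) as [HY | HY].
  - exists (p, q); split; [|apply sqrt_pos].
    apply injective_projections; simpl; nra.
  - exists (p, - q); split; [|apply sqrt_pos].
    apply injective_projections; simpl; nra.
Qed.

Lemma phi_car_Csquare (z : C) : phi_car z = (((1 + z) * (1 + z) + 1) / 2)%C.
Proof. unfold phi_car; field. Qed.

Lemma Omega_car_cardioid (w : C) : Omega_car w <-> cardioid (2 * w - 1)%C.
Proof.
  split.
  - intros [z [Hz ->]].
    assert (Hu : Cmod ((1 + z) - 1) < 1) by (replace ((1 + z) - 1)%C with z by ring; exact Hz).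
    replace (2 * phi_car z - 1)%C with ((1 + z) * (1 + z))%C
      by (rewrite phi_car_Csquare; field).
    apply cardioid_Csquare; [|exact Hu].
    apply Cmod_sub1_lt1 in Hu; pose proof (pow2_ge_0 (Cmod (1 + z))); lra.
  - intros Hw; destruct (Csqrt_exists (2 * w - 1)) as [u [Hu HRe]].
    exists (u - 1)%C; split.
    + apply cardioid_Csquare; [exact HRe | now rewrite Hu].
    + rewrite phi_car_Csquare; replace (1 + (u - 1))%C with u by ring.
      rewrite Hu; field.
Qed.

Lemma Cmod_double_sub (w : C) (a : R) :
  Cmod (2 * w - 1 - RtoC (2 * a - 1)) = 2 * Cmod (w - RtoC a).
Proof.
  replace (2 * w - 1 - RtoC (2 * a - 1))%C with (2 * (w - RtoC a))%C
    by (apply injective_projections; simpl; ring).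
  rewrite Cmod_mult, Cmod_R, Rabs_pos_eq; lra.
Qed.

Lemma disk_sub_cardioid_lo (B : R) (W : C) :
  0 < B <= 2 -> Cmod (W - RtoC B) < B -> cardioid W.
Proof.
  intros HB Hd; unfold cardioid.
  pose proof (Cmod_sub_RtoC_sq W B) as E; pose proof (Cmod_ge_0 (W - RtoC B)) as Hd0.
  pose proof (Cmod_ge_0 W) as Hm0; pose proof (Re_le_Cmod W) as HX.
  set (m := Cmod W) in *; set (X := Re W) in *.
  assert (HmX : m ^ 2 < 2 * B * X) by nra.
  assert (Hm : 0 < m < 2 * B) by nra.
  assert (Hslope : (B - 1) * m <= 2 * B) by nra.
  nra.
Qed.

Lemma disk_sub_cardioid_hi (B : R) (W : C) :
  2 <= B < 4 -> Cmod (W - RtoC B) < 4 - B -> cardioid W.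
Proof.
  intros HB Hd; unfold cardioid.
  pose proof (Cmod_sub_RtoC_sq W B) as E; pose proof (Cmod_ge_0 (W - RtoC B)) as Hd0.
  assert (Hm4 : Cmod W < 4).
  { pose proof (Cmod_triangle (W - RtoC B) (RtoC B)) as T.
    replace (W - RtoC B + RtoC B)%C with W in T by ring.
    rewrite Cmod_R, Rabs_pos_eq in T; lra. }
  pose proof (Cmod_ge_0 W) as Hm0.
  set (m := Cmod W) in *; set (X := Re W) in *.
  assert (HmX : m ^ 2 + 8 * B - 16 < 2 * B * X) by nra.
  assert (Hg : (m - 4) * ((B - 1) * m + 2 * B - 4) <= 0) by (apply Rmult_le_0_r; nra).
  nra.
Qed.

Lemma cardioid_Cmod_lt_4 (W : C) : cardioid W -> Cmod W < 4.
Proof. unfold cardioid; pose proof (Re_le_Cmod W); pose proof (Cmod_ge_0 W); nra. Qed.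

Lemma cardioid_dist_sq_lt (B : R) (W : C) : 0 < B -> cardioid W ->
  Cmod (W - RtoC B) ^ 2 < (1 - B) * Cmod W ^ 2 + 2 * B * Cmod W + B ^ 2.
Proof. unfold cardioid; intros HB HW; rewrite Cmod_sub_RtoC_sq; nra. Qed.

Lemma cardioid_sub_disk_lo (B : R) (W : C) :
  0 < B <= 4/3 -> cardioid W -> Cmod (W - RtoC B) < 4 - B.
Proof.
  intros HB HW; apply Cmod_lt_of_sq_lt; [lra|].
  eapply Rlt_le_trans; [exact (cardioid_dist_sq_lt B W ltac:(lra) HW)|].
  pose proof (cardioid_Cmod_lt_4 W HW); pose proof (Cmod_ge_0 W).
  set (m := Cmod W) in *.
  assert (E : (4 - B) ^ 2 - ((1 - B) * m ^ 2 + 2 * B * m + B ^ 2)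
              = (4 - m) * (4 - 2 * B + (1 - B) * m)) by ring.
  assert (0 <= (4 - m) * (4 - 2 * B + (1 - B) * m)) by (apply Rmult_le_pos; nra).
  lra.
Qed.

Lemma cardioid_sub_disk_hi (B : R) (W : C) :
  1 < B -> cardioid W -> Cmod (W - RtoC B) ^ 2 < B ^ 3 / (B - 1).
Proof.
  intros HB HW.
  eapply Rlt_le_trans; [exact (cardioid_dist_sq_lt B W ltac:(lra) HW)|].
  set (m := Cmod W).
  assert (E : B ^ 3 / (B - 1) - ((1 - B) * m ^ 2 + 2 * B * m + B ^ 2)
              = (B - (B - 1) * m) ^ 2 / (B - 1)) by (field; lra).
  assert (0 <= (B - (B - 1) * m) ^ 2 / (B - 1))
    by (apply Rdiv_le_0_compat; [apply pow2_ge_0 | lra]).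
  lra.
Qed.

Theorem lemma2p2 (a : R) (ha : 1/2 < a < 5/2) :
  (forall w : C, Cmod (w - RtoC a)%C < r_a a -> Omega_car w) /\
  (forall w : C, Omega_car w -> Cmod (w - RtoC a)%C < R_a a).
Proof.
  split; intros w Hw.
  - apply Omega_car_cardioid; unfold r_a in Hw.
    destruct (Rle_dec a (3/2)).
    + apply (disk_sub_cardioid_lo (2 * a - 1)); [lra|].
      rewrite Cmod_double_sub; lra.
    + apply (disk_sub_cardioid_hi (2 * a - 1)); [lra|].
      rewrite Cmod_double_sub; lra.
  - apply Omega_car_cardioid in Hw; unfold R_a.
    destruct (Rle_dec a (7/6)).
    + apply (cardioid_sub_disk_lo (2 * a - 1)) in Hw; [|lra].
      rewrite Cmod_double_sub in Hw; lra.
    + apply (cardioid_sub_disk_hi (2 * a - 1)) in Hw; [|lra].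
      rewrite Cmod_double_sub in Hw; apply Cmod_lt_sqrt.
      replace ((2 * a - 1) ^ 3 / (8 * (a - 1)))
        with ((2 * a - 1) ^ 3 / (2 * a - 1 - 1) / 4) by (field; lra).
      lra.
Qed.
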